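(* Let $\mathbf{X}=(X_1,\dots,X_d)$ be a random vector such that each $X_i$ is a.s. nonnegative with $0<E(X_i)<\infty$, let $\|\mathbf{x}\|_F=E(\max(|x_0|,|x_1|X_1,\dots,|x_d|X_d))$, let $c_i=E(X_i)$ and $\|(x_0,\dots,x_d)\|_{\infty,\mathbf{c}}:=\max(|x_0|,|x_1|c_1,\dots,|x_d|c_d)$. Then $\|(1,1/c_1,\dots,1/c_d)\|_F=1$ if and only if $\|\cdot\|_F=\|\cdot\|_{\infty,\mathbf{c}}$. *)

From HB Require Import structures.
From mathcomp Require Import all_boot all_order all_algebra.
From mathcomp Require Import all_classical all_reals all_analysis.
Set Implicit Arguments. Unset Strict Implicit. Unset Printing Implicit Defensive.
Import Order.TTheory GRing.Theory Num.Theory.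
Local Open Scope ring_scope.

(* The norm ||(x_0, x_1, ..., x_d)||_F = E(max(|x_0|, |x_1| X_1, ..., |x_d| X_d)),
   with the (d+1)-vector split as x0 : R and x : 'I_d -> R (x_{i+1} = x i). *)
Definition normF d0 (T : measurableType d0) (R : realType) (P : probability T R)
  (n : nat) (X : 'I_n -> T -> R) (x0 : R) (x : 'I_n -> R) : \bar R :=
  'E_P[fun t => \big[Num.max/`|x0|]_(i < n) (`|x i| * X i t)].

(* c_i = E(X_i) (a real number, under the finiteness assumption). *)
Definition cmean d0 (T : measurableType d0) (R : realType) (P : probability T R)
  (n : nat) (X : 'I_n -> T -> R) (i : 'I_n) : R := fine 'E_P[X i].

Definition norm_inf_c (R : realType) (n : nat) (c : 'I_n -> R)
  (x0 : R) (x : 'I_n -> R) : R :=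
  \big[Num.max/`|x0|]_(i < n) (`|x i| * c i).

From HB Require Import structures.
From mathcomp Require Import all_boot all_order all_algebra.
From mathcomp Require Import all_classical all_reals all_analysis.
From mathcomp Require Import measurable_realfun.
Import Order.TTheory GRing.Theory Num.Theory.
Local Open Scope ring_scope.

(* Taking expectations of [max(|x_0|, |x_i| X_i) >= |x_0|, |x_i| X_i] gives
   ||x||_F >= ||x||_{infty,c} for every x.  Conversely, with u = (1, 1/c),
   max(|x_0|, |x_i| X_i) <= ||x||_{infty,c} max(1, X_i / c_i) pointwise, so
   ||x||_F <= ||x||_{infty,c} ||u||_F.  As ||u||_{infty,c} = 1, the two norms
   agree everywhere exactly when ||u||_F = 1. *)

Lemma measurable_bigmax d0 (T : measurableType d0) (R : realType) n (a : R)
    (f : 'I_n -> T -> R) :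
  (forall i, measurable_fun setT (f i)) ->
  measurable_fun setT (fun t => \big[Num.max/a]_(i < n) f i t).
Proof.
elim: n f => [|n IH] f mf.
  by under eq_fun do rewrite big_ord0; exact: measurable_cst.
under eq_fun do rewrite big_ord_recl.
apply: measurable_maxr => //.
exact: (IH (fun i => f (lift ord0 i))).
Qed.

Lemma bigmax_EFin_le (R : realType) n (a : R) (F : 'I_n -> R) (y : \bar R) :
  (a%:E <= y)%E -> (forall i, ((F i)%:E <= y)%E) ->
  ((\big[Num.max/a]_(i < n) F i)%:E <= y)%E.
Proof.
move=> ay Fy; elim/big_ind: _ => // u v hu hv.
by case: (leP u v).
Qed.

Lemma bigmax_norm_ge0 {R : realType} {n} (x0 : R) (F : 'I_n -> R) :
  0 <= \big[Num.max/`|x0|]_(i < n) F i.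
Proof. exact: le_trans (normr_ge0 x0) (bigmax_ge_id _ _ _ _). Qed.

Lemma norm_inf_c_inv (R : realType) n (c : 'I_n -> R) :
  (forall i, 0 < c i) -> norm_inf_c c 1 (fun i => (c i)^-1) = 1.
Proof.
move=> c_gt0; apply: le_anti; apply/andP; split.
  apply: bigmax_le; first by rewrite normr1.
  by move=> i _; rewrite ger0_norm ?mulVf ?gt_eqF // invr_ge0 ltW.
by rewrite -{1}(normr1 R); exact: bigmax_ge_id.
Qed.

Lemma bigmax_le_norm_inf_c_mul (R : realType) n (c : 'I_n -> R) (x0 : R)
    (x y : 'I_n -> R) :
  (forall i, 0 < c i) ->
  \big[Num.max/`|x0|]_(i < n) (`|x i| * y i) <=
  norm_inf_c c x0 x * \big[Num.max/`|1|]_(i < n) (`|(c i)^-1| * y i).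
Proof.
move=> c_gt0; have K0 : 0 <= norm_inf_c c x0 x := bigmax_norm_ge0 _ _.
have M1 : 1 <= \big[Num.max/`|1|]_(i < n) (`|(c i)^-1| * y i).
  by rewrite -{1}(normr1 R); exact: bigmax_ge_id.
apply: bigmax_le => [|i _].
  exact: le_trans (bigmax_ge_id _ _ _ _) (ler_peMr K0 M1).
have [y_ge0|y_lt0] := leP 0 (y i); last first.
  apply: le_trans (_ : 0 <= _); first by rewrite mulr_ge0_le0 // ltW.
  exact: mulr_ge0 K0 (bigmax_norm_ge0 _ _).
have -> : `|x i| * y i = (`|x i| * c i) * (`|(c i)^-1| * y i).
  by rewrite [`|_^-1|]ger0_norm ?invr_ge0 ?(ltW (c_gt0 i)) // mulrA mulfK ?gt_eqF.
apply: ler_pM; rewrite ?mulr_ge0 ?(ltW (c_gt0 i)) //.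
  exact: (le_bigmax _ (fun i => `|x i| * c i)).
exact: (le_bigmax _ (fun i => `|(c i)^-1| * y i)).
Qed.

Section ExpectationFacts.
Variables (d0 : measure_display) (T : measurableType d0) (R : realType).
Variable P : probability T R.

Lemma ge0_expectationZl (k : R) (f : T -> R) :
  0 <= k -> measurable_fun setT f -> (forall t, 0 <= f t) ->
  ('E_P[fun t => (k * f t)%R] = k%:E * 'E_P[f])%E.
Proof.
move=> k0 mf f0; rewrite unlock.
under eq_integral do rewrite EFinM.
by rewrite ge0_integralZl_EFin //; [move=> t _; rewrite lee_fin|
  exact/measurable_EFinP].
Qed.

Lemma expectation_maxr0 (f : T -> R) :
  measurable_fun setT f -> {ae P, forall t, 0 <= f t} ->
  ('E_P[fun t => Num.max (f t) 0%R] = 'E_P[f])%E.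
Proof.
move=> mf f_ge0; rewrite unlock; apply: ae_eq_integral => //.
- by apply/measurable_EFinP; exact: measurable_maxr.
- exact/measurable_EFinP.
- by apply: filterS f_ge0 => t /= ft _; rewrite (max_idPl ft).
Qed.

End ExpectationFacts.

Section NormF.
Variables (d0 : measure_display) (T : measurableType d0) (R : realType).
Variables (P : probability T R) (n : nat) (X : 'I_n -> T -> R) (c : 'I_n -> R).
Hypothesis mX : forall i, measurable_fun setT (X i).
Hypothesis X_ge0 : forall i, {ae P, forall t, 0 <= X i t}.
Hypothesis c_gt0 : forall i, 0 < c i.
Hypothesis EX : forall i, ('E_P[X i] = (c i)%:E)%E.

Let mN (x0 : R) (x : 'I_n -> R) :
  measurable_fun setT (fun t => \big[Num.max/`|x0|]_(i < n) (`|x i| * X i t)).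
Proof. by apply: measurable_bigmax => i; exact: measurable_funM. Qed.

Lemma norm_inf_c_le_normF x0 x : ((norm_inf_c c x0 x)%:E <= normF P X x0 x)%E.
Proof.
apply: bigmax_EFin_le => [|i].
  rewrite -(expectation_cst P); apply: expectation_le => //.
  - by move=> t; exact: bigmax_norm_ge0.
  - by apply: aeW => t; exact: bigmax_ge_id.
pose Xp t := Num.max (X i t) 0.
have mXp : measurable_fun setT Xp by exact: measurable_maxr.
have Xp_ge0 t : 0 <= Xp t by rewrite le_max lexx orbT.
rewrite EFinM -EX -expectation_maxr0 // -ge0_expectationZl //.
apply: expectation_le => //.
- exact: measurable_funM.
- by move=> t; apply: mulr_ge0 => //; exact: Xp_ge0.
- by move=> t; exact: bigmax_norm_ge0.
- apply: aeW => t; have [Xt_ge0|_] := leP 0 (X i t); last first.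
    by rewrite mulr0 bigmax_norm_ge0.
  exact: (le_bigmax _ (fun i => `|x i| * X i t)).
Qed.

Lemma normF_le_mul x0 x :
  (normF P X x0 x <=
   (norm_inf_c c x0 x)%:E * normF P X 1 (fun i => (c i)^-1)%R)%E.
Proof.
have K0 : 0 <= norm_inf_c c x0 x := bigmax_norm_ge0 _ _.
rewrite /normF -ge0_expectationZl //; last by move=> t; exact: bigmax_norm_ge0.
apply: expectation_le => //.
- exact: measurable_funM.
- by move=> t; exact: bigmax_norm_ge0.
- by move=> t; rewrite mulr_ge0 // bigmax_norm_ge0.
- by apply: aeW => t; exact: bigmax_le_norm_inf_c_mul.
Qed.

Lemma normF_eq_norm_inf_cP :
  normF P X 1 (fun i => (c i)^-1) = 1%:E <->
  forall x0 x, normF P X x0 x = (norm_inf_c c x0 x)%:E.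
Proof.
split=> [u1 x0 x|normFE].
  apply: le_anti; rewrite norm_inf_c_le_normF andbT.
  by rewrite -[leRHS]mule1 -u1; exact: normF_le_mul.
by rewrite normFE norm_inf_c_inv.
Qed.

End NormF.

Theorem proposition2p18 (R : realType) (d0 : measure_display)
  (T : measurableType d0) (P : probability T R) (d : nat)
  (X : 'I_d -> {RV P >-> R})
  (hX0 : forall i, {ae P, forall t, 0 <= X i t})
  (hXpos : forall i, (0 < 'E_P[X i])%E)
  (hXfin : forall i, ('E_P[X i] < +oo)%E) :
  normF P (fun i => X i) 1 (fun i => (cmean P (fun j => X j) i)^-1) = 1%:E <->
  (forall (x0 : R) (x : 'I_d -> R),
     normF P (fun i => X i) x0 x =
     (norm_inf_c (cmean P (fun j => X j)) x0 x)%:E).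
Proof.
have EX i : ('E_P[X i] = (cmean P (fun j => X j) i)%:E)%E.
  by rewrite /cmean fineK // ge0_fin_numE ?hXfin // ltW.
by apply: normF_eq_norm_inf_cP => // i; rewrite -lte_fin -EX.
Qed.
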